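(* For every integer $k\ge0$, every finite $k$-cozy graph is $k$-comfortable.
   Context: An undirected graph $G$ is $k$-cozy if it is connected, $k$-regular, and equipped with a $1$-factorization, i.e., an assignment of colors from $\{1,\dots,k\}$ to its edges such that the $k$ edges incident at each vertex receive distinct colors. An undirected graph $G=(V,E)$ is $k$-comfortable if for every vertex $v\in V$ there is another vertex $v'\in V$ such that there exist $k$ pairwise edge-disjoint $v$–$v'$ paths in $G$. *)

From mathcomp Require Import all_boot.
Set Implicit Arguments. Unset Strict Implicit. Unset Printing Implicit Defensive.

Definition simple_graph (T : finType) (e : rel T) : Prop :=
  symmetric e /\ irreflexive e.

Definition connected_graph (T : finType) (e : rel T) : Prop :=
  forall x y : T, connect e x y.

Definition regular (T : finType) (e : rel T) (k : nat) : Prop :=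
  forall x : T, #|[set y | e x y]| = k.

(* Edges are
   unordered, so the colour c x y of edge {x,y} is symmetric. *)
Definition one_factorization (T : finType) (e : rel T) (k : nat)
  (c : T -> T -> 'I_k) : Prop :=
  (forall x y, e x y -> c x y = c y x) /\
  (forall x y z, e x y -> e x z -> c x y = c x z -> y = z).

Definition cozy (T : finType) (e : rel T) (k : nat) : Prop :=
  connected_graph e /\ regular e k /\
  exists c : T -> T -> 'I_k, one_factorization e c.

Definition is_path (T : finType) (e : rel T) (x y : T) (p : seq T) : bool :=
  [&& path e x p, last x p == y & uniq (x :: p)].

Definition path_edges (T : finType) (x : T) (p : seq T) : seq {set T} :=
  [seq [set a.1; a.2] | a <- zip (x :: p) p].

Definition comfortable (T : finType) (e : rel T) (k : nat) : Prop :=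
  forall v : T, exists v' : T, v' != v /\
    exists P : 'I_k -> seq T,
      (forall i, is_path e v v' (P i)) /\
      (forall i j, i != j -> forall E, E \in path_edges v (P i) ->
                                       E \notin path_edges v (P j)).

From mathcomp Require Import all_boot order ssralg ssrnum ssrint zify.
Set Implicit Arguments. Unset Strict Implicit. Unset Printing Implicit Defensive.
Import Order.TTheory GRing.Theory Num.Theory.

(* Fix a vertex v.  Each colour class of the 1-factorization is a perfect
   matching, i.e. a fixed-point-free involution of the vertices, so a vertex set
   of odd size is left by an edge of every colour: a set with fewer than k
   boundary edges has even size.  By posimodularity of the cut function,
   cut (C \ D) + cut (D \ C) <= cut C + cut D, a family of such sets can be
   uncrossed into a disjoint one with the same union, which is therefore even as
   well.  If every w <> v were separated from v by fewer than k edges, the sets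
   of this kind avoiding v would cover V \ {v}; but V itself has no boundary
   edge, so |V| is even and V \ {v} is odd.  Hence some w <> v has only cuts
   of size >= k to v, and the edge version of Menger's theorem, proved by
   augmenting unit flows and decomposing the resulting flow into paths, gives
   k edge-disjoint v-w paths. *)

Lemma sum_count_mem (I : finType) (P : pred I) (s : seq I) :
  \sum_(i | P i) count_mem i s = count P s.
Proof.
elim: s => [|j s IHs] /=; first by rewrite big1.
rewrite big_split /= IHs; congr (_ + _).
rewrite big_mkcond (bigD1 j) //= eqxx big1 => [|i /negbTE]; first by case: (P j).
by rewrite eq_sym => ->; case: (P i).
Qed.

Lemma simple_path_of_connect (T : finType) (r : rel T) x y : connect r x y ->
  exists p, [/\ path r x p, uniq (x :: p) & last x p = y].
Proof.
move=> /connectP [p0 p0_r ->]; case: (shortenP p0_r) => p p_r p_uniq _.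
by exists p.
Qed.

Lemma set2_eq (T : finType) (x y x' y' : T) :
  [set x; y] = [set x'; y'] -> (x', y') = (x, y) \/ (x', y') = (y, x).
Proof.
move=> xy_eq; have : x \in [set x'; y'] by rewrite -xy_eq set21.
have : y \in [set x'; y'] by rewrite -xy_eq set22.
have : x' \in [set x; y] by rewrite xy_eq set21.
have : y' \in [set x; y] by rewrite xy_eq set22.
by do 4 case/set2P => ?; subst; auto.
Qed.

(** * Walks, cuts and unit flows *)

Section Walks.
Variable T : finType.
Implicit Types (u x y : T) (p : seq T) (S : {set T}) (a : T * T).

Definition arcs u p : seq (T * T) := zip (u :: p) p.

Definition leaves S a : bool := (a.1 \in S) && (a.2 \notin S).

Definition walk_flow u p a : int :=
  ((count_mem a (arcs u p))%:Z - (count_mem (swap_pair a) (arcs u p))%:Z)%R.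

Definition netflow (f : T * T -> int) S : int := (\sum_(a | leaves S a) f a)%R.

Lemma arcs_cons u x p : arcs u (x :: p) = (u, x) :: arcs x p.
Proof. by []. Qed.

Lemma path_arcsE (r : rel T) u p : path r u p = all (fun a => r a.1 a.2) (arcs u p).
Proof. by elim: p u => //= x p IHp u; rewrite IHp. Qed.

Lemma mem_arcs2 u p a : a \in arcs u p -> a.2 \in p.
Proof. by move/(map_f snd); rewrite -/(unzip2 _) unzip2_zip. Qed.

Lemma arcs_swap_notin u p x y :
  uniq (u :: p) -> (x, y) \in arcs u p -> (y, x) \notin arcs u p.
Proof.
elim: p u => [|z p IHp] u //= /andP [uNzp zp_uniq].
have [uNz uNp] : u != z /\ u \notin p by apply/norP; rewrite -in_cons.
rewrite !arcs_cons !in_cons !xpair_eqE negb_or.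
case/orP => [/andP [/eqP ? /eqP ?] | xy_p]; first subst x y.
  by rewrite eq_sym (negbTE uNz) /=; apply: contra uNp => /mem_arcs2.
rewrite IHp // andbT; apply: contraNN uNp => /andP [/eqP <- _].
exact: mem_arcs2 xy_p.
Qed.

Lemma walk_flow_swap u p x y : walk_flow u p (y, x) = (- walk_flow u p (x, y))%R.
Proof. by rewrite /walk_flow opprB. Qed.

Lemma walk_flowE u p x y : uniq (u :: p) ->
  walk_flow u p (x, y) = (((x, y) \in arcs u p)%:Z - ((y, x) \in arcs u p)%:Z)%R.
Proof. by move=> up_uniq; rewrite /walk_flow !count_uniq_mem // zip_uniql. Qed.

Lemma count_leaves_walk S u p :
  count (leaves S) (arcs u p) + (last u p \in S) =
  count (leaves (~: S)) (arcs u p) + (u \in S).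
Proof.
elim: p u => [|x p IHp] u; first by rewrite /= addnC.
rewrite arcs_cons /=; have := IHp x; rewrite /leaves !inE /=.
by case: (u \in S); case: (x \in S) => /=; lia.
Qed.

Lemma netflow_walk S u p :
  netflow (walk_flow u p) S = ((u \in S)%:Z - (last u p \in S)%:Z)%R.
Proof.
rewrite /netflow /walk_flow sumrB -!raddf_sum /= sum_count_mem.
rewrite (reindex_inj (can_inj swap_pairK)) /=.
under eq_bigr do rewrite swap_pairK.
rewrite (eq_bigl (leaves (~: S))) => [|a]; last by rewrite /leaves !inE negbK andbC.
rewrite sum_count_mem; have := count_leaves_walk S u p.
by case: (u \in S); case: (last u p \in S) => /=; lia.
Qed.

Lemma netflowD (f g : T * T -> int) S :
  netflow (f \+ g)%R S = (netflow f S + netflow g S)%R.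
Proof. exact: big_split. Qed.

Lemma netflowB (f g : T * T -> int) S :
  netflow (f \- g)%R S = (netflow f S - netflow g S)%R.
Proof. exact: sumrB. Qed.

Lemma leaves_reachable (r : rel T) u a :
  leaves [set x | connect r u x] a -> ~~ r a.1 a.2.
Proof.
rewrite /leaves !inE => /andP [u_a1]; apply: contra => r_a.
exact: connect_trans u_a1 (connect1 r_a).
Qed.

End Walks.

Section Cuts.
Variables (T : finType) (e : rel T).
Hypothesis e_sym : symmetric e.
Implicit Types (S C D : {set T}).

Definition cut S : nat := \sum_(a | leaves S a) e a.1 a.2.

Lemma cutC S : cut (~: S) = cut S.
Proof.
rewrite /cut (reindex_inj (can_inj swap_pairK)).
apply: eq_big => [a | a _]; first by rewrite /leaves /= !inE negbK andbC.
by rewrite /= e_sym.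
Qed.

Lemma cut_card S : cut S = #|[set a | leaves S a && e a.1 a.2]|.
Proof.
rewrite -sum1_card /cut big_mkcond [RHS]big_mkcond; apply: eq_bigr => a _; rewrite inE.
by case: (leaves S a); case: (e _ _).
Qed.

Lemma cut_double S :
  (cut S).*2 = \sum_(a : T * T) (e a.1 a.2 && ((a.1 \in S) != (a.2 \in S))).
Proof.
rewrite -addnn -{2}cutC /cut !(big_mkcond (leaves _)) -big_split /=.
apply: eq_bigr => a _; rewrite /leaves !inE.
by case: (a.1 \in S); case: (a.2 \in S); case: (e _ _).
Qed.

Lemma cut_posimodular C D : cut (C :\: D) + cut (D :\: C) <= cut C + cut D.
Proof.
rewrite -leq_double !doubleD !cut_double -!big_split /=.
apply: leq_sum => a _; rewrite !inE.
by case: (a.1 \in C); case: (a.2 \in C); case: (a.1 \in D); case: (a.2 \in D);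
  case: (e _ _).
Qed.

End Cuts.

Section Flows.
Variables (T : finType) (e : rel T).
Hypothesis e_sym : symmetric e.
Variables v w : T.
Implicit Types (f : T * T -> int) (p : seq T) (S : {set T}) (a : T * T).
Local Open Scope ring_scope.

(* Flows live on the ordered pairs (x, y), antisymmetrically, so that each
   undirected edge is a channel of capacity one usable in either direction. *)
Definition unit_flow f : Prop :=
  [/\ forall x y, f (y, x) = - f (x, y), forall x y, f (x, y) <= 1 &
      forall x y, f (x, y) != 0 -> e x y].

(* Conservation at inner vertices is not imposed separately: the net flow out
   of every v-w cut being n is all that augmentation and decomposition need. *)
Definition flow_value f (n : nat) : Prop :=
  forall S, v \in S -> w \notin S -> netflow f S = n%:Z.

Definition residual f : rel T := [rel x y | e x y && (f (x, y) < 1)].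

Lemma walk_flow_edge u p x y : path e u p -> walk_flow u p (x, y) != 0 -> e x y.
Proof.
rewrite path_arcsE => /allP p_e; rewrite /walk_flow.
have [/p_e // | /count_memPn ->] := boolP ((x, y) \in arcs u p).
have [/p_e /= | /count_memPn ->] := boolP ((y, x) \in arcs u p); last by [].
by rewrite e_sym.
Qed.

Lemma flow_value_add_walk f n p :
  last v p = w -> flow_value f n -> flow_value (f \+ walk_flow v p) n.+1.
Proof.
move=> p_last f_val S vS wS.
by rewrite netflowD netflow_walk f_val // p_last vS (negbTE wS); lia.
Qed.

Lemma flow_value_sub_walk f n p :
  last v p = w -> flow_value f n.+1 -> flow_value (f \- walk_flow v p) n.
Proof.
move=> p_last f_val S vS wS.
by rewrite netflowB netflow_walk f_val // p_last vS (negbTE wS); lia.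
Qed.

Lemma unit_flow_augment f p : unit_flow f ->
  path (residual f) v p -> uniq (v :: p) -> unit_flow (f \+ walk_flow v p).
Proof.
move=> [f_swap f_le1 f_edge] p_res p_uniq.
have p_e : path e v p by apply: sub_path p_res => x y /andP [].
split=> x y /=.
- by rewrite f_swap walk_flow_swap -opprD.
- rewrite walk_flowE //; have [xy_p | _] := boolP ((x, y) \in arcs v p).
    rewrite (negbTE (arcs_swap_notin p_uniq xy_p)).
    by move: p_res; rewrite path_arcsE => /allP/(_ _ xy_p)/andP [_] /=; lia.
  by have := f_le1 x y; case: (_ \in _) => /=; lia.
- have [-> | ] := eqVneq (f (x, y)) 0; last by move=> /f_edge.
  by rewrite add0r; apply: walk_flow_edge.
Qed.

Lemma unit_flow_of_cuts k :
  (forall S, v \in S -> w \notin S -> (k <= cut e S)%N) ->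
  exists f, unit_flow f /\ flow_value f k.
Proof.
move=> cut_ge; suff flow_le n : (n <= k)%N -> exists f, unit_flow f /\ flow_value f n.
  exact: flow_le.
elim: n => [_ | n IHn lt_nk].
  by exists (fun=> 0); split=> [|S _ _]; [split | rewrite /netflow big1].
have [f [f_unit f_val]] := IHn (ltnW lt_nk).
have [/simple_path_of_connect [p [p_res p_uniq p_last]] | vNw] :=
  boolP (connect (residual f) v w).
  exists (f \+ walk_flow v p); split; first exact: unit_flow_augment.
  exact: flow_value_add_walk.
have [_ f_le1 f_edge] := f_unit.
pose S := [set x | connect (residual f) v x].
have vS : v \in S by rewrite inE connect0.
have wS : w \notin S by rewrite inE.
have saturated : netflow f S = (cut e S)%:Z.
  rewrite /netflow /cut raddf_sum; apply: eq_bigr => -[x y] /leaves_reachable /=.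
  have [xy_e | xNy] /= := boolP (e x y).
    by rewrite /residual /= xy_e -leNgt => ?; have := f_le1 x y; lia.
  by move=> _; apply/eqP; apply: contraNT xNy => /f_edge.
by have := f_val S vS wS; have := cut_ge S vS wS; rewrite saturated; lia.
Qed.

Lemma saturated_connect f n : unit_flow f -> flow_value f n.+1 ->
  connect [rel x y | f (x, y) == 1] v w.
Proof.
move=> [_ f_le1 _] f_val; apply: contraT => vNw.
pose S := [set x | connect [rel x y | f (x, y) == 1] v x].
have vS : v \in S by rewrite inE connect0.
have := f_val S vS (_ : w \notin S); rewrite inE => /(_ vNw).
suff : netflow f S <= 0 by lia.
apply: sumr_le0 => -[x y] /leaves_reachable /= /negbTE fNxy.
by have := f_le1 x y; move: fNxy; lia.
Qed.

Lemma sub_saturated_walkE f u p x y : unit_flow f -> uniq (u :: p) ->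
    {in arcs u p, forall a, f a = 1} ->
  (f \- walk_flow u p) (x, y) =
    if ((x, y) \in arcs u p) || ((y, x) \in arcs u p) then 0 else f (x, y).
Proof.
move=> [f_swap _ _] p_uniq f_p; rewrite /= walk_flowE //.
have [xy_p | _] := boolP ((x, y) \in arcs u p).
  by rewrite (negbTE (arcs_swap_notin p_uniq xy_p)) f_p //; lia.
have [yx_p | _] /= := boolP ((y, x) \in arcs u p); last by rewrite subr0.
by have := f_p _ yx_p; rewrite f_swap; lia.
Qed.

Lemma unit_flow_sub_walk f u p : unit_flow f -> uniq (u :: p) ->
  {in arcs u p, forall a, f a = 1} -> unit_flow (f \- walk_flow u p).
Proof.
move=> f_unit p_uniq f_p; have [f_swap f_le1 f_edge] := f_unit.
split=> x y; rewrite !sub_saturated_walkE //.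
- by rewrite orbC; case: ifP => _; [rewrite oppr0 | exact: f_swap].
- by case: ifP => _; [| exact: f_le1].
- by case: ifP => [|_ /f_edge]; rewrite ?eqxx.
Qed.

Lemma unit_flow_decomposition n f : unit_flow f -> flow_value f n ->
  exists L : seq (seq T), [/\ size L = n,
    forall q, q \in L -> is_path e v w q /\ {in arcs v q, forall a, f a = 1} &
    pairwise (fun p q => [disjoint arcs v p & arcs v q]) L].
Proof.
elim: n f => [|n IHn] f f_unit f_val; first by exists [::].
have /simple_path_of_connect [p [p_sat p_uniq p_last]] :=
  saturated_connect f_unit f_val.
have f_p : {in arcs v p, forall a, f a = 1}.
  by move: p_sat; rewrite path_arcsE => /allP p_sat [x y] /p_sat /eqP.
have [L [sizeL L_paths L_disj]] :=
  IHn _ (unit_flow_sub_walk f_unit p_uniq f_p) (flow_value_sub_walk p_last f_val).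
have L_avoid q x y : q \in L -> (x, y) \in arcs v q ->
    (f \- walk_flow v p) (x, y) = f (x, y) /\ (x, y) \notin arcs v p.
  move=> /L_paths [_ f'_q] /f'_q; rewrite sub_saturated_walkE //.
  by case: ifP => [_ /eqP | /norP [-> _]] //; rewrite eq_sym oner_eq0.
exists (p :: L); split=> [|q|]; first by rewrite /= sizeL.
  rewrite in_cons => /predU1P [-> | q_L].
    split=> //; rewrite /is_path p_uniq p_last eqxx !andbT.
    by apply: sub_path p_sat => x y /eqP fxy; case: f_unit => _ _; apply; rewrite fxy.
  have [q_path f'_q] := L_paths q q_L; split=> // -[x y] xy_q.
  by have [<- _] := L_avoid q x y q_L xy_q; exact: f'_q.
rewrite /= L_disj andbT; apply/allP => q q_L; rewrite disjoint_sym disjoint_has.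
by apply/hasPn => -[x y] /(L_avoid q x y q_L) [].
Qed.

Lemma path_edges_disjoint f u p q : unit_flow f ->
  {in arcs u p, forall a, f a = 1} -> {in arcs u q, forall a, f a = 1} ->
  [disjoint arcs u p & arcs u q] ->
  forall E, E \in path_edges u p -> E \notin path_edges u q.
Proof.
move=> [f_swap _ _] f_p f_q pq_disj _ /mapP [[x y] xy_p ->].
apply/mapP => -[[x' y'] xy'_q /set2_eq [xy'E | xy'E]]; rewrite xy'E in xy'_q.
  by rewrite (disjointFr pq_disj xy_p) in xy'_q.
by have := f_q _ xy'_q; rewrite f_swap f_p //; lia.
Qed.

Theorem edge_menger k : (forall S, v \in S -> w \notin S -> (k <= cut e S)%N) ->
  exists P : 'I_k -> seq T, (forall i, is_path e v w (P i)) /\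
    (forall i j, i != j ->
       forall E, E \in path_edges v (P i) -> E \notin path_edges v (P j)).
Proof.
move=> cut_ge; have [f [f_unit f_val]] := unit_flow_of_cuts cut_ge.
have [L [sizeL L_paths L_disj]] := unit_flow_decomposition f_unit f_val.
have L_nth (i : 'I_k) : nth [::] L i \in L by rewrite mem_nth ?sizeL.
exists (fun i => nth [::] L i); split=> [i | i j].
  by have [] := L_paths _ (L_nth i).
have disj (i' j' : 'I_k) : (i' < j')%N ->
    [disjoint arcs v (nth [::] L i') & arcs v (nth [::] L j')].
  by move=> lt_ij; apply: (pairwiseP [::] L_disj); rewrite ?inE ?sizeL.
have f_nth i' := (L_paths _ (L_nth i')).2.
case: (ltngtP i j) => [lt_ij _ | lt_ji _ | /val_inj ->]; last by rewrite eqxx.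
  exact: path_edges_disjoint f_unit (f_nth i) (f_nth j) (disj _ _ lt_ij).
by apply: path_edges_disjoint f_unit (f_nth i) (f_nth j) _; rewrite disjoint_sym disj.
Qed.

End Flows.

(** * Parity of sets with few boundary edges *)

Lemma involution_card_even (T : finType) (s : T -> T) (A : {set T}) :
  involutive s -> (forall x, s x != x) -> {in A, forall x, s x \in A} ->
  ~~ odd #|A|.
Proof.
move=> sK s_fpf A_s.
have order_s x : order s x = 2.
  apply: (@order_cycle _ _ [:: x; s x]); rewrite ?mem_head //=.
    by rewrite sK !eqxx.
  by rewrite inE eq_sym s_fpf.
have A_closed : fclosed s A.
  move=> x _ /eqP <-; apply/idP/idP => [/A_s // | /A_s]; by rewrite sK.
have A_order : A \subset order_set s 2 by apply/subsetP => x _; rewrite inE order_s.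
by rewrite -(fcard_order_set (inv_inj sK) A_order A_closed) oddM andbF.
Qed.

Lemma even_cover (T : finType) (P : pred {set T}) :
  (forall X, P X -> ~~ odd #|X|) ->
  (forall C D, P C -> P D -> P (C :\: D) || P (D :\: C)) ->
  forall F : {set {set T}}, {subset F <= P} -> ~~ odd #|cover F|.
Proof.
move=> P_even P_uncross F; have [n] := ubnP (\sum_(X in F) #|X|).
elim: n F => // n IHn F /ltnSE F_size F_P.
have [F_triv | F_ntriv] := boolP (trivIset F).
  rewrite -(eqP F_triv); elim/big_ind: _ => // [m1 m2 | X /F_P /P_even //].
  by rewrite oddD => /negbTE -> /negbTE ->.
have /exists_inP [C CF /exists_inP [D DF /andP [CD CD_meet]]] :
    [exists C in F, exists D in F, (C != D) && ~~ [disjoint C & D]].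
  apply: contraNT F_ntriv => /exists_inPn no_meet.
  apply/trivIsetP => C D CF DF CD; move/exists_inPn/(_ D DF): (no_meet C CF).
  by rewrite CD negbK.
wlog CD_P : C D CF DF CD CD_meet / P (C :\: D).
  move=> wlog_P; have /orP [|DC_P] := P_uncross C D (F_P C CF) (F_P D DF).
    exact: wlog_P.
  by apply: (wlog_P D C); rewrite 1?eq_sym 1?disjoint_sym.
(* Trading C for C :\: D keeps the union, as C :&: D lies in D. *)
pose F' := (C :\: D) |: (F :\ C).
have D_sub : D \subset cover (F :\ C) by apply: bigcup_sup; rewrite !inE eq_sym CD.
have cover_F' : cover F' = cover F.
  rewrite /cover bigcup_setU big_set1 (big_setD1 C CF) /= -/(cover (F :\ C)).
  apply/setP => x; rewrite !inE; have := subsetP D_sub x.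
  by case: (x \in D); case: (x \in C); case: (x \in cover _) => //= ->.
have F'_size : \sum_(X in F') #|X| <= #|C :\: D| + \sum_(X in F :\ C) #|X|.
  rewrite /F'; have [DC_F | DC_nF] := boolP (C :\: D \in F :\ C).
    by rewrite (setUidPr _) ?sub1set // leq_addl.
  by rewrite big_setU1.
have C_shrinks : #|C :\: D| < #|C|.
  rewrite cardsD; move: CD_meet; rewrite -setI_eq0 -card_gt0.
  by have := subset_leq_card (subsetIl C D); lia.
rewrite -cover_F'; apply: (IHn F') => [|X].
  rewrite (big_setD1 C CF) /= in F_size.
  by apply: leq_ltn_trans F'_size (leq_trans _ F_size); rewrite -addSn leq_add2r.
by rewrite !inE => /predU1P [-> | /andP [_ /F_P]].
Qed.

Section OneFactorization.
Variables (T : finType) (e : rel T) (k : nat) (c : T -> T -> 'I_k).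
Hypotheses (e_sym : symmetric e) (e_irr : irreflexive e).
Hypotheses (e_reg : regular e k) (c_fact : one_factorization e c).

Lemma colour_neighbour x i : exists2 y, e x y & c x y = i.
Proof.
have [_ c_inj] := c_fact.
have cx_inj : {in [set y | e x y] &, injective (c x)}.
  by move=> y z; rewrite !inE; exact: c_inj.
suff : i \in c x @: [set y | e x y].
  by case/imsetP => y; rewrite inE => xy_e ->; exists y.
suff -> : c x @: [set y | e x y] = [set: 'I_k] by rewrite inE.
by apply/eqP; rewrite eqEcard subsetT cardsT card_ord card_in_imset // e_reg leqnn.
Qed.

Definition mate i x : T := odflt x [pick y | e x y && (c x y == i)].

Lemma mateP i x : e x (mate i x) /\ c x (mate i x) = i.
Proof.
rewrite /mate; case: pickP => [y /andP [? /eqP] // | no_mate].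
have [y xy_e xy_i] := colour_neighbour x i.
by have := no_mate y; rewrite xy_e xy_i eqxx.
Qed.

Lemma mateK i : involutive (mate i).
Proof.
move=> x; have [c_sym c_inj] := c_fact.
have [xy_e xy_i] := mateP i x; have [yz_e yz_i] := mateP i (mate i x).
by apply: c_inj yz_e _ _; rewrite 1?e_sym // yz_i -c_sym.
Qed.

Lemma mate_neq i x : mate i x != x.
Proof. by apply: contraTneq (mateP i x).1 => ->; rewrite e_irr. Qed.

Lemma small_cut_even X : cut e X < k -> ~~ odd #|X|.
Proof.
rewrite ltnNge; apply: contraNN => X_odd.
have leaving i : exists x, (x \in X) && (mate i x \notin X).
  apply/existsP; apply: contraTT X_odd => /existsPn X_closed.
  apply: involution_card_even (mateK i) (mate_neq i) _ => x x_X.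
  by have := X_closed x; rewrite x_X negbK.
pose g i := (xchoose (leaving i), mate i (xchoose (leaving i))).
have g_inj : injective g.
  move=> i j g_ij; rewrite -(mateP i (xchoose (leaving i))).2.
  by rewrite -[RHS](mateP j (xchoose (leaving j))).2; case: g_ij => -> ->.
have -> : k = #|g @: [set: 'I_k]| by rewrite card_imset // cardsT card_ord.
rewrite cut_card; apply/subset_leq_card/subsetP => _ /imsetP [i _ ->].
by rewrite inE /leaves /= (mateP i _).1 andbT; exact: xchooseP (leaving i).
Qed.

Lemma exists_partner_large_cuts v :
  exists2 w, w != v & forall S : {set T}, v \in S -> w \notin S -> k <= cut e S.
Proof.
have k_gt0 : 0 < k := leq_ltn_trans (leq0n _) (ltn_ord (c v v)).
have [/existsP [w /andP [wv /forallP w_far]] | /existsPn v_near] := boolP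
    [exists w, (w != v) &&
       [forall S : {set T}, (v \in S) ==> (w \notin S) ==> (k <= cut e S)]].
  by exists w => // S vS wS; have := w_far S; rewrite vS wS.
pose small : pred {set T} := fun X => (v \notin X) && (cut e X < k).
have cover_small : cover [set X | small X] = [set~ v].
  apply/setP => x; rewrite !inE; apply/bigcupP/idP => [[X] | xv].
    by rewrite inE => /andP [vX _] xX; apply: contraNneq vX => <-.
  have := v_near x; rewrite xv /= negb_forall => /existsP [S].
  rewrite !negb_imply -ltnNge => /and3P [vS xS S_small].
  by exists (~: S); rewrite ?inE // /small inE vS (cutC e_sym).
have small_even X : small X -> ~~ odd #|X| by case/andP => _ /small_cut_even.
have small_uncross C D : small C -> small D -> small (C :\: D) || small (D :\: C).
  move=> /andP [/negbTE vC C_small] /andP [/negbTE vD D_small].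
  rewrite /small !inE vC vD !andbF /=.
  by have := cut_posimodular e_sym C D; lia.
have : ~~ odd #|[set~ v]|.
  rewrite -cover_small; apply: even_cover small_even small_uncross _ _ => X.
  by rewrite inE.
have : ~~ odd #|[set: T]|.
  by apply: small_cut_even; rewrite /cut big_pred0 // => a; rewrite /leaves !inE.
rewrite cardsC1 cardsT; have : 0 < #|T| by apply/card_gt0P; exists v.
by case: #|T| => // n _ /=; rewrite negbK => ->.
Qed.

End OneFactorization.

Theorem mainTheorem14 (k : nat) (T : finType) (e : rel T) :
  simple_graph e -> cozy e k -> comfortable e k.
Proof.
move=> [e_sym e_irr] [_ [e_reg [c c_fact]]] v.
have [w wv w_far] := exists_partner_large_cuts e_sym e_irr e_reg c_fact v.
by exists w; split=> //; exact: (edge_menger e_sym w_far).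
Qed.
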